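(* Let $X$ be a normed space and $Y$ a Banach space, and let $l\in\{-1,1\}$. Suppose that an odd mapping $f:X\to Y$ satisfies $\|D_f(x,y)\|\le\phi(x,y)$ for all $x,y\in X$, where $\phi:X\times X\to[0,\infty)$ is a function such that $$\sum_{i=1}^{\infty}8^{il}\phi\left(\frac{x}{2^{il}},\frac{x}{2^{il}}\right)<\infty$$ for all $x\in X$ and $\lim_{n\to\infty}8^{ln}\phi\left(\frac{x}{2^{ln}},\frac{y}{2^{ln}}\right)=0$ for all $x,y\in X$. Then the limit $$C(x)=\lim_{n\to\infty}8^{ln}\left[f\left(\frac{x}{2^{l(n-l)}}\right)-2f\left(\frac{x}{2^{ln}}\right)\right]$$ exists for all $x\in X$, and $C:X\to Y$ is the unique cubic mapping which satisfies $$3C(x+3y)-C(3x+y)=12[C(x+y)+C(x-y)]-16[C(x)+C(y)]+12C(2y)-4C(2x)\quad(x,y\in X)$$ and $$\|f(2x)-2f(x)-C(x)\|\le\frac12\sum_{i=\frac{|l-1|}{2}}^{\infty}8^{il}\phi\left(\frac{x}{2^{l(i+l)}},\frac{x}{2^{l(i+l)}}\right)$$ for all $x\in X$ (the summation starts at $i=0$ if $l=1$ and at $i=1$ if $l=-1$).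
   Context: For a mapping $f:X\to Y$ define $$D_f(x,y)=3f(x+3y)-f(3x+y)-12[f(x+y)+f(x-y)]+16[f(x)+f(y)]-12f(2y)+4f(2x)$$ for $x,y\in X$. A mapping $g:X\to Y$ is called cubic if $g(x+2y)-3g(x+y)+3g(x)-g(x-y)=6g(y)$ for all $x,y\in X$. *)

From HB Require Import structures.
From mathcomp Require Import all_boot all_order all_algebra.
From mathcomp Require Import all_classical all_reals all_analysis.
Set Implicit Arguments. Unset Strict Implicit. Unset Printing Implicit Defensive.
Import Order.TTheory GRing.Theory Num.Theory.
Import numFieldNormedType.Exports.
Local Open Scope ring_scope.

Definition Dmap (R : numDomainType) (X Y : lmodType R) (f : X -> Y) (x y : X) : Y :=
  3 *: f (x + 3 *: y) - f (3 *: x + y) - 12 *: (f (x + y) + f (x - y))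
  + 16 *: (f x + f y) - 12 *: f (2 *: y) + 4 *: f (2 *: x).

Definition cubic (R : numDomainType) (X Y : lmodType R) (g : X -> Y) : Prop :=
  forall x y : X, g (x + 2 *: y) - 3 *: g (x + y) + 3 *: g x - g (x - y) = 6 *: g y.

(* Put g x := f (2 x) - 2 f x and (c, s) := (8^l, 2^-l).  Since f is odd,
   D_f(y, y) = 2 (g (2 y) - 8 g y), so |c g (s x) - g x| is bounded by a single
   value of phi.  The iterates c^n g (s^n x) thus have summable consecutive
   differences; their limit C satisfies c C (s x) = C x, i.e. C (2 x) = 8 C x, and
   stays within the sum of the series from g.  As D is linear in the map, D_C is
   the limit of c^n D_g (s^n x, s^n y), which vanishes by the hypothesis on phi;
   D_C = 0, oddness and C (2 x) = 8 C x then give the cubic equation.  Two maps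
   that are invariant under C |-> c C (s .) and close to g in this sense differ by
   at most twice a tail of a convergent series, hence coincide. *)

From HB Require Import structures.
From mathcomp Require Import all_boot all_order all_algebra.
From mathcomp Require Import all_classical all_reals all_analysis.
From mathcomp Require Import ring lra.
Import Order.TTheory GRing.Theory Num.Theory.
Import numFieldNormedType.Exports.
Local Open Scope classical_set_scope.
Local Open Scope ring_scope.

HB.lock Definition lincomb {R : comNzRingType} {V : lmodType R}
  n (v : nat -> V) (r : nat -> R) : V := \sum_(i < n) r i *: v i.

Section LinearCombination.
Context {R : comNzRingType} {V : lmodType R}.
Implicit Types (v : nat -> V) (r q : nat -> R).

Lemma lincombD n v r q : lincomb n v r + lincomb n v q = lincomb n v (r \+ q).
Proof. by rewrite !lincomb.unlock -big_split; apply: eq_bigr => i _; rewrite scalerDl. Qed.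

Lemma lincombN n v r : - lincomb n v r = lincomb n v (\- r).
Proof. by rewrite !lincomb.unlock -sumrN; apply: eq_bigr => i _; rewrite scaleNr. Qed.

Lemma lincombZ n v k r : k *: lincomb n v r = lincomb n v (fun i => k * r i).
Proof. by rewrite !lincomb.unlock scaler_sumr; apply: eq_bigr => i _; rewrite scalerA. Qed.

Lemma lincomb0 n v : 0 = lincomb n v (fun=> 0).
Proof. by rewrite lincomb.unlock big1 // => i _; rewrite scale0r. Qed.

Lemma lincomb_nth n v j :
  (j < n)%N -> v j = lincomb n v (fun i => if i == j then 1 else 0).
Proof.
move=> ltjn; rewrite lincomb.unlock (bigD1 (Ordinal ltjn)) //= eqxx scale1r.
rewrite big1 ?addr0 // => i; rewrite -(inj_eq val_inj) => /negbTE /= ->.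
by rewrite scale0r.
Qed.

Lemma eq_lincomb n v r q :
  (forall i, (i < n)%N -> r i = q i) -> lincomb n v r = lincomb n v q.
Proof. by move=> erq; rewrite !lincomb.unlock; apply: eq_bigr => i _; rewrite erq. Qed.

End LinearCombination.

(* [lmod_ring] proves identities between linear combinations of vectors: the
   maximal subterms not built from [+], [-], [*:] and [0] are the atoms, both
   sides are rewritten as [lincomb]s over them and the coefficients are compared
   with [ring].  Atoms are identified up to conversion, because the same numeral
   may carry different structure instances on the two sides. *)
Ltac lmod_add_atom t atoms :=
  match atoms with
  | context [?u :: _] => let _ := constr:(erefl u : t = u) in atoms
  | _ => constr:(t :: atoms)
  end.

Ltac lmod_atoms t atoms :=
  lazymatch t with
  | ?a + ?b => let atoms := lmod_atoms a atoms in lmod_atoms b atoms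
  | - ?a => lmod_atoms a atoms
  | _ *: ?a => lmod_atoms a atoms
  | 0 => atoms
  | _ => lmod_add_atom t atoms
  end.

Ltac fold_atoms v atoms k :=
  lazymatch atoms with
  | ?a :: ?atoms => rewrite -[a]/(v k); fold_atoms v atoms (S k)
  | nil => idtac
  end.

Ltac lmod_ring :=
  lazymatch goal with
  | |- @eq ?V ?lhs ?rhs =>
    let atoms := lmod_atoms lhs (@nil V) in
    let atoms := lmod_atoms rhs atoms in
    let n := eval compute in (size atoms) in
    let v := fresh "v" in
    let i := fresh "i" in
    pose v := nth 0 atoms;
    fold_atoms v atoms 0%N;
    rewrite ?(@lincomb_nth _ _ n v) // ?(@lincomb0 _ _ n v);
    rewrite !(lincombN, lincombZ, lincombD);
    apply: eq_lincomb => i;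
    repeat (first [by [] | case: i => [|i]; first by move=> _ /=; ring])
  end.

Section FunctionalEquation.
Context {R : numFieldType} {X Y : lmodType R}.
Implicit Types (h : X -> Y) (x y : X).

Definition doubling_defect h x : Y := h (2 *: x) - 2 *: h x.

Lemma odd_map0 h : (forall x, h (- x) = - h x) -> h 0 = 0.
Proof.
move=> hN; have : 2 *: h 0 = 0 by rewrite scaler_nat mulr2n -{1}oppr0 hN addNr.
by move/eqP; rewrite scaler_eq0 pnatr_eq0 => /eqP.
Qed.

Lemma doubling_defect_odd h :
  (forall x, h (- x) = - h x) -> forall x, doubling_defect h (- x) = - doubling_defect h x.
Proof. by move=> hN x; rewrite /doubling_defect scalerN !hN; lmod_ring. Qed.

Lemma DmapB h1 h2 x y :
  Dmap (fun u => h1 u - h2 u) x y = Dmap h1 x y - Dmap h2 x y.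
Proof. by rewrite /Dmap; lmod_ring. Qed.

Lemma DmapZ k h x y : Dmap (fun u => k *: h u) x y = k *: Dmap h x y.
Proof. by rewrite /Dmap; lmod_ring. Qed.

Lemma Dmap_comp_scale t h x y :
  Dmap (fun u => h (t *: u)) x y = Dmap h (t *: x) (t *: y).
Proof. by rewrite /Dmap !scalerDr !scalerN !scalerA ![t * _]mulrC. Qed.

Lemma Dmap_doubling_defect h x y :
  Dmap (doubling_defect h) x y = Dmap h (2 *: x) (2 *: y) - 2 *: Dmap h x y.
Proof. by rewrite DmapB DmapZ Dmap_comp_scale. Qed.

Lemma Dmap_diag h y : h 0 = 0 ->
  Dmap h y y = 2 *: (doubling_defect h (2 *: y) - 8 *: doubling_defect h y).
Proof.
move=> h0; rewrite /Dmap /doubling_defect subrr h0.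
have -> : y + 3 *: y = 2 *: (2 *: y) by lmod_ring.
have -> : 3 *: y + y = 2 *: (2 *: y) by lmod_ring.
have -> : y + y = 2 *: y by lmod_ring.
by lmod_ring.
Qed.

Lemma Dmap_eq0_balanced h x y : Dmap h x y = 0 ->
  3 *: h (x + 3 *: y) - h (3 *: x + y)
  = 12 *: (h (x + y) + h (x - y)) - 16 *: (h x + h y) + 12 *: h (2 *: y) - 4 *: h (2 *: x).
Proof. by move=> D0; apply/eqP; rewrite -subr_eq0 -D0 /Dmap; apply/eqP; lmod_ring. Qed.

Lemma cubic_of_Dmap_eq0 h :
  (forall x, h (- x) = - h x) -> (forall x, h (2 *: x) = 8 *: h x) ->
  (forall x y, Dmap h x y = 0) -> cubic h.
Proof.
move=> hN h2 D0 x y.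
(* At (y - x, x + y) and (- x - y, x - y) every argument is, up to sign and a
   factor 2, one of x, y, x + y, x - y, x + 2 y, 2 y - x; three times the first
   relation minus the second is 64 times the cubic equation. *)
have := D0 (- x - y) (x - y); have := D0 (y - x) (x + y); rewrite /Dmap.
have -> : y - x + 3 *: (x + y) = 2 *: (x + 2 *: y) by lmod_ring.
have -> : 3 *: (y - x) + (x + y) = 2 *: (2 *: y - x) by lmod_ring.
have -> : y - x + (x + y) = 2 *: y by lmod_ring.
have -> : y - x - (x + y) = - (2 *: x) by lmod_ring.
have -> : y - x = - (x - y) by lmod_ring.
have -> : - x - y + 3 *: (x - y) = - (2 *: (2 *: y - x)) by lmod_ring.
have -> : 3 *: (- x - y) + (x - y) = - (2 *: (x + 2 *: y)) by lmod_ring.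
have -> : - x - y + (x - y) = - (2 *: y) by lmod_ring.
have -> : - x - y - (x - y) = - (2 *: x) by lmod_ring.
have -> : - x - y = - (x + y) by lmod_ring.
rewrite !scalerN !hN !h2 => D1 D2.
move: (congr2 (fun a b => 3 *: a - b) D1 D2); rewrite /= scaler0 subr0 => D.
apply: (@scalerI _ _ 64); first by rewrite pnatr_eq0.
by apply/eqP; rewrite -subr_eq0 -D; apply/eqP; lmod_ring.
Qed.

Lemma cubic_hom h : cubic h -> forall x, h (2 *: x) = 8 *: h x.
Proof.
move=> hc x.
have h0 : h 0 = 0.
  have := hc 0 0; rewrite scaler0 !addr0 subr0 => c0.
  have : 6 *: h 0 = 0 by rewrite -c0; lmod_ring.
  by move/eqP; rewrite scaler_eq0 pnatr_eq0 => /eqP.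
have hN : h (- x) = - h x.
  have := hc (- x) x; have := hc 0 (- x).
  rewrite !add0r opprK scalerN addNr h0.
  have -> : - x + 2 *: x = x by lmod_ring.
  have -> : - x - x = - (2 *: x) by lmod_ring.
  move=> c2 c3; have : 6 *: (h (- x) + h x) = 0.
    by rewrite scalerDr -c2 -c3; lmod_ring.
  by move/eqP; rewrite scaler_eq0 pnatr_eq0 addr_eq0 => /eqP.
have := hc 0 x; rewrite !add0r h0 hN => c1.
apply/eqP; rewrite -subr_eq0 -(subrr (6 *: h x)) -{1}c1; apply/eqP.
by lmod_ring.
Qed.

End FunctionalEquation.

Section SummableSteps.
Context {R : realType} {Y : completeNormedModType R} {a : nat -> Y} {b : nat -> R}.
Hypotheses (b_ge0 : forall n, 0 <= b n) (b_summable : cvgn (series b))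
  (a_step_le : forall n, `|a n.+1 - a n| <= b n).

Let steps_summable : cvgn [normed series (telescope a)].
Proof.
apply: (series_le_cvg _ b_ge0 _ b_summable) => n /=; first exact: normr_ge0.
exact: a_step_le.
Qed.

Let a_telescope : a = (fun n => a 0%N + series (telescope a) n).
Proof. by apply/funext => n; rewrite -eq_sum_telescope. Qed.

Lemma summable_steps_cvg : cvgn a.
Proof.
by rewrite a_telescope; apply: is_cvgD; [exact: is_cvg_cst | exact: normed_cvg].
Qed.

Lemma summable_steps_lim_dist : `|a 0%N - limn a| <= limn (series b).
Proof.
rewrite {2}a_telescope limD ?lim_cst //; [|exact: cvg_cst|exact: normed_cvg steps_summable].
rewrite opprD addrA subrr add0r normrN.
apply: le_trans (lim_series_norm steps_summable) _.
by apply: lim_series_le => // n; exact: a_step_le.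
Qed.

End SummableSteps.

Definition dilation_limit {R : realType} {X : lmodType R} {Y : normedModType R}
    (g : X -> Y) (c s : R) (x : X) : Y :=
  limn (fun n => c ^+ n *: g (s ^+ n *: x)).

Definition dilation_majorant {R : realType} {X : lmodType R}
    (c s : R) (eps : X -> R) (x : X) : R :=
  limn (series (fun n => c ^+ n * eps (s ^+ n *: x))).

Section DilationLimit.
Context {R : realType} {X : lmodType R} {Y : completeNormedModType R}.
Context {g : X -> Y} {c s : R} {eps : X -> R}.
Hypotheses (c_ge0 : 0 <= c) (eps_ge0 : forall x, 0 <= eps x)
  (g_step_le : forall x, `|c *: g (s *: x) - g x| <= eps x)
  (eps_summable : forall x, cvgn (series (fun n => c ^+ n * eps (s ^+ n *: x)))).

Local Notation L := (dilation_limit g c s).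
Local Notation M := (dilation_majorant c s eps).

Let iterate x n := c ^+ n *: g (s ^+ n *: x).

Let iterate_step_le x n : `|iterate x n.+1 - iterate x n| <= c ^+ n * eps (s ^+ n *: x).
Proof.
rewrite /iterate exprSr exprS -!scalerA -scalerBr normrZ ger0_norm ?exprn_ge0 //.
by apply: ler_wpM2l; [exact: exprn_ge0 | exact: g_step_le].
Qed.

Let weighted_eps_ge0 x n : 0 <= c ^+ n * eps (s ^+ n *: x).
Proof. by rewrite mulr_ge0 ?exprn_ge0. Qed.

Lemma dilation_limit_cvg x : (fun n => c ^+ n *: g (s ^+ n *: x)) @ \oo --> L x.
Proof. exact: summable_steps_cvg (weighted_eps_ge0 x) (eps_summable x) (iterate_step_le x). Qed.

Lemma dilation_limit_dist x : `|g x - L x| <= M x.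
Proof.
have := summable_steps_lim_dist (weighted_eps_ge0 x) (eps_summable x) (iterate_step_le x).
by rewrite /iterate expr0 !scale1r.
Qed.

Lemma dilation_limit_invariant x : c *: L (s *: x) = L x.
Proof.
apply: (cvg_unique _ _ (dilation_limit_cvg x)); first exact: norm_hausdorff.
rewrite /= -cvg_shiftS /=.
have -> : (fun n => c ^+ n.+1 *: g (s ^+ n.+1 *: x))
          = c \*: (fun n => c ^+ n *: g (s ^+ n *: (s *: x))).
  by apply/funext => n; rewrite /= scalerA -exprS scalerA -exprSr.
exact: cvgZl_tmp (dilation_limit_cvg _).
Qed.

Lemma dilation_limitN : (forall x, g (- x) = - g x) -> forall x, L (- x) = - L x.
Proof.
move=> gN x; apply: (cvg_unique _ (dilation_limit_cvg (- x))); first exact: norm_hausdorff.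
have -> : (fun n => c ^+ n *: g (s ^+ n *: - x)) = - (fun n => c ^+ n *: g (s ^+ n *: x)).
  by apply/funext => n; rewrite /= scalerN gN scalerN.
exact: cvgN (dilation_limit_cvg x).
Qed.

Lemma dilation_majorant_tail x n :
  c ^+ n * M (s ^+ n *: x) = M x - series (fun k => c ^+ k * eps (s ^+ k *: x)) n.
Proof.
set b := fun k => c ^+ k * eps (s ^+ k *: x).
have tail_sum m : c ^+ n * series (fun k => c ^+ k * eps (s ^+ k *: (s ^+ n *: x))) m
                  = series b (m + n)%N - series b n.
  rewrite /series /= [in RHS](@big_cat_nat _ _ _ n) ?leq_addl //= [RHS]addrC addKr.
  rewrite (big_addn 0 (m + n) n) addnK mulr_sumr; apply: eq_bigr => k _.
  by rewrite /b scalerA -exprD mulrA -exprD [(n + k)%N]addnC.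
apply: (cvg_unique _ (cvgMl_tmp (eps_summable (s ^+ n *: x)))); first exact: Rhausdorff.
rewrite /= (eq_cvg _ _ tail_sum); apply: cvgB; last exact: cvg_cst.
by rewrite (cvg_shiftn n (series b)); exact: eps_summable.
Qed.

Lemma dilation_limit_unique C :
  (forall x, c *: C (s *: x) = C x) -> (forall x, `|g x - C x| <= M x) -> C = L.
Proof.
move=> C_inv C_dist; apply/funext => x.
set b := fun k => c ^+ k * eps (s ^+ k *: x).
have CL_iter n : C x - L x = c ^+ n *: (C (s ^+ n *: x) - L (s ^+ n *: x)).
  elim: n => [|n IH]; first by rewrite !expr0 !scale1r.
  rewrite IH -(C_inv (s ^+ n *: x)) -(dilation_limit_invariant (s ^+ n *: x)).
  by rewrite -scalerBr !scalerA -exprSr -exprS.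
have CL_le n : `|C x - L x| <= 2 * (M x - series b n).
  rewrite (CL_iter n) normrZ ger0_norm ?exprn_ge0 // -dilation_majorant_tail mulrCA.
  apply: ler_wpM2l; first exact: exprn_ge0.
  set y := s ^+ n *: x.
  have -> : C y - L y = (g y - L y) - (g y - C y) by lmod_ring.
  apply: le_trans (ler_normB _ _) _; rewrite mulr_natl mulr2n.
  exact: lerD (dilation_limit_dist y) (C_dist y).
have tail_cvg : (fun n => 2 * (M x - series b n)) @ \oo --> 0.
  rewrite -[0](mulr0 2) -(subrr (M x)).
  by apply: cvgMl_tmp; apply: cvgB; [exact: cvg_cst | exact: eps_summable].
have : `|C x - L x| <= limn (fun n => 2 * (M x - series b n)).
  by apply: limr_ge; [exact: cvgP tail_cvg | apply: nearW; exact: CL_le].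
by rewrite (cvg_lim _ tail_cvg) // normr_le0 subr_eq0 => /eqP.
Qed.

End DilationLimit.

Lemma Dmap_cvg {R : realType} {X : lmodType R} {Y : normedModType R}
    (h_ : nat -> X -> Y) (h : X -> Y) x y :
  (forall u, (fun n => h_ n u) @ \oo --> h u) ->
  (fun n => Dmap (h_ n) x y) @ \oo --> Dmap h x y.
Proof.
move=> h_cvg; rewrite /Dmap.
by repeat (first [apply: cvgD | apply: cvgN | apply: cvgZl_tmp]); exact: h_cvg.
Qed.

Section DoublingDefect.
Context {R : realType} {X : normedModType R} {Y : completeNormedModType R}.
Context {f : X -> Y} {phi : X -> X -> R}.
Hypotheses (f_odd : forall x, f (- x) = - f x)
  (Df_le : forall x y, `|Dmap f x y| <= phi x y).

Lemma doubling_defect_diag_le y :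
  `|doubling_defect f (2 *: y) - 8 *: doubling_defect f y| <= phi y y / 2.
Proof.
have := Df_le y y; rewrite (Dmap_diag f y (odd_map0 f f_odd)) normrZ ger0_norm //.
by move=> le; lra.
Qed.

Lemma Dmap_limit_eq0 {c s : R} {L : X -> Y} : 0 <= c ->
  (forall x y, (fun n => c ^+ n * phi (s ^+ n *: x) (s ^+ n *: y)) @ \oo --> 0) ->
  (forall x, (fun n => c ^+ n *: doubling_defect f (s ^+ n *: x)) @ \oo --> L x) ->
  forall x y, Dmap L x y = 0.
Proof.
move=> c_ge0 phi_lim L_cvg x y.
pose D n := Dmap (fun u => c ^+ n *: doubling_defect f (s ^+ n *: u)) x y.
have D_le n : `|D n| <= c ^+ n * phi (s ^+ n *: (2 *: x)) (s ^+ n *: (2 *: y))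
                       + 2 * (c ^+ n * phi (s ^+ n *: x) (s ^+ n *: y)).
  rewrite /D (DmapZ (c ^+ n) (fun u => doubling_defect f (s ^+ n *: u))).
  rewrite Dmap_comp_scale Dmap_doubling_defect normrZ ger0_norm ?exprn_ge0 //.
  rewrite mulrCA -mulrDr; apply: ler_wpM2l; first exact: exprn_ge0.
  rewrite !(scalerA 2) !(mulrC 2) -!scalerA.
  apply: le_trans (ler_normB _ _) _; rewrite normrZ ger0_norm //.
  by apply: lerD; [exact: Df_le | rewrite mulrC; apply: ler_wpM2l => //; exact: Df_le].
apply: (cvg_unique _ (Dmap_cvg _ _ x y L_cvg)); first exact: norm_hausdorff.
apply: norm_cvg0; apply: (squeeze_cvgr (f := fun=> 0) _ (cvg_cst _)).
  by apply: nearW => n; rewrite normr_ge0; exact: D_le.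
rewrite -[0](addr0 0) -{2}(mulr0 2).
by apply: cvgD; [exact: phi_lim | apply: cvgMl_tmp; exact: phi_lim].
Qed.

End DoublingDefect.

Lemma cvg_series_shift {R : realType} (G : nat -> R) (a : R) k :
  cvgn (series G) ->
  series (fun n => a * G (n + k)%N) @ \oo --> a * limn (fun N => \sum_(k <= i < N) G i).
Proof.
move=> G_cvg.
have -> : series (fun n => a * G (n + k)%N) = (fun N => a * \sum_(k <= i < N + k) G i).
  by apply/funext => N; rewrite /series /= -mulr_sumr (big_addn 0 (N + k) k) addnK.
apply: cvgMl_tmp; rewrite (cvg_shiftn k (fun N => \sum_(k <= i < N) G i)).
by rewrite is_cvg_series_restrict.
Qed.

Lemma exprzM_nat (R : unitRingType) (x : R) (z : int) (n : nat) :
  x ^ (z * n%:Z) = (x ^ z) ^+ n.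
Proof. by rewrite -exprz_exp -exprnP. Qed.

Definition diag_term {R : numDomainType} {X : lmodType R}
    (phi : X -> X -> R) (c s : R) (x : X) (i : nat) : R :=
  c ^+ i * phi (s ^+ i *: x) (s ^+ i *: x).

Section SignedExponent.
Context {R : realType} {l : int}.
Hypothesis l_sign : l = 1 \/ l = -1.
Local Notation c := ((8 : R) ^ l).
Local Notation s := ((2 : R) ^ l)^-1.
Local Notation i0 := (absz (l - 1))./2.

Let l_sqr : l * l = 1.
Proof. by case: l_sign => ->. Qed.

Lemma inv_exp2_signE n : (2 ^ (l * n%:Z))^-1 = s ^+ n :> R.
Proof. by rewrite exprzM_nat exprVn. Qed.

Lemma inv_exp2_sign_subE n : (2 ^ (l * (n%:Z - l)))^-1 = 2 * s ^+ n :> R.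
Proof.
by rewrite mulrBr l_sqr expfzDr ?pnatr_eq0 // exprN1 invfM invrK inv_exp2_signE mulrC.
Qed.

Lemma inv_exp2_sign_addE n : (2 ^ (l * (n%:Z + l)))^-1 = s ^+ n / 2 :> R.
Proof. by rewrite mulrDr l_sqr expfzDr ?pnatr_eq0 // expr1z invfM inv_exp2_signE. Qed.

Lemma sign_weightE {X : lmodType R} (phi : X -> X -> R) x y n :
  (8 : R) ^ (l * n%:Z) * phi ((2 ^ (l * n%:Z))^-1 *: x) ((2 ^ (l * n%:Z))^-1 *: y)
  = c ^+ n * phi (s ^+ n *: x) (s ^+ n *: y).
Proof. by rewrite exprzM_nat inv_exp2_signE. Qed.

Lemma sign_iterateE {X Y : lmodType R} (f : X -> Y) x n :
  (8 : R) ^ (l * n%:Z) *: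
    (f ((2 ^ (l * (n%:Z - l)))^-1 *: x) - 2 *: f ((2 ^ (l * n%:Z))^-1 *: x))
  = c ^+ n *: doubling_defect f (s ^+ n *: x).
Proof. by rewrite exprzM_nat inv_exp2_sign_subE inv_exp2_signE -scalerA. Qed.

Lemma sign_invariantP {X Y : lmodType R} (h : X -> Y) :
  (forall x, c *: h (s *: x) = h x) <-> (forall x, h (2 *: x) = 8 *: h x).
Proof.
have [two_neq0 eight_neq0] : (2 : R) != 0 /\ (8 : R) != 0 by rewrite !pnatr_eq0.
case: l_sign => ->; rewrite ?expr1z ?exprN1 ?invrK; split=> h_eq x.
- by rewrite -(h_eq (2 *: x)) scalerA mulVf // scale1r.
- by rewrite -h_eq scalerA mulfV // scale1r.
- by rewrite -(h_eq x) scalerA mulfV // scale1r.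
- by rewrite h_eq scalerA mulVf // scale1r.
Qed.

Lemma sign_dilation_step_le {X Y : normedModType R} {g : X -> Y} {phi : X -> X -> R} :
  (forall y, `|g (2 *: y) - 8 *: g y| <= phi y y / 2) -> forall x,
  `|c *: g (s *: x) - g x| <= 2^-1 * diag_term phi c s (2^-1 *: x) i0.
Proof.
have [two_neq0 eight_neq0] : (2 : R) != 0 /\ (8 : R) != 0 by rewrite !pnatr_eq0.
move=> g_le x; rewrite /diag_term; case: l_sign => -> /=.
- rewrite !expr1z !expr0 mul1r scale1r; set y := 2^-1 *: x.
  have -> : x = 2 *: y by rewrite /y scalerA mulfV // scale1r.
  by rewrite distrC mulrC; exact: g_le.
- rewrite !exprN1 invrK !expr1 scalerA mulfV // scale1r.
  have -> : 8^-1 *: g (2 *: x) - g x = 8^-1 *: (g (2 *: x) - 8 *: g x).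
    by rewrite scalerBr scalerA mulVf // scale1r.
  rewrite normrZ ger0_norm ?invr_ge0 // [X in _ <= X]mulrCA.
  by apply: ler_wpM2l; [rewrite invr_ge0 | rewrite mulrC; exact: g_le].
Qed.

Lemma sign_diag_summable {X : lmodType R} {phi : X -> X -> R} {x : X} :
  cvgn (fun N => \sum_(1 <= i < N) (8 : R) ^ (i%:Z * l)
                   * phi ((2 ^ (i%:Z * l))^-1 *: x) ((2 ^ (i%:Z * l))^-1 *: x)) ->
  cvgn (series (diag_term phi c s x)).
Proof.
rewrite -(is_cvg_series_restrict 1).
rewrite (eq_is_cvg _ (g := fun N => \sum_(1 <= i < N) diag_term phi c s x i)) // => N.
by apply: eq_bigr => i _; rewrite [i%:Z * l]mulrC sign_weightE.
Qed.

Let eps_seriesE {X : lmodType R} (phi : X -> X -> R) x :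
  series (fun n => c ^+ n * (2^-1 * diag_term phi c s (2^-1 *: (s ^+ n *: x)) i0))
  = series (fun n => 2^-1 * diag_term phi c s (2^-1 *: x) (n + i0)%N).
Proof.
congr series; apply/funext => n; rewrite /diag_term mulrCA; congr (_ * _).
rewrite mulrA -exprD.
suff -> : s ^+ i0 *: (2^-1 *: (s ^+ n *: x)) = s ^+ (n + i0) *: (2^-1 *: x) by [].
by rewrite exprD; lmod_ring.
Qed.

Lemma sign_eps_summable {X : lmodType R} {phi : X -> X -> R} {x : X} :
  cvgn (series (diag_term phi c s (2^-1 *: x))) ->
  cvgn (series (fun n => c ^+ n * (2^-1 * diag_term phi c s (2^-1 *: (s ^+ n *: x)) i0))).
Proof.
by move=> summable; rewrite eps_seriesE; exact: cvgP _ (cvg_series_shift _ _ _ summable).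
Qed.

Lemma sign_majorantE {X : lmodType R} {phi : X -> X -> R} {x : X} :
  cvgn (series (diag_term phi c s (2^-1 *: x))) ->
  2^-1 * limn (fun N => \sum_(i0 <= i < N) (8 : R) ^ (i%:Z * l)
                 * phi ((2 ^ (l * (i%:Z + l)))^-1 *: x) ((2 ^ (l * (i%:Z + l)))^-1 *: x))
  = dilation_majorant c s (fun z => 2^-1 * diag_term phi c s (2^-1 *: z) i0) x.
Proof.
move=> summable; rewrite /dilation_majorant eps_seriesE.
rewrite (cvg_lim _ (cvg_series_shift _ _ _ summable)) //.
congr (_ * _); do 2 f_equal; apply/funext => N; apply: eq_bigr => i _.
by rewrite [i%:Z * l]mulrC exprzM_nat inv_exp2_sign_addE -scalerA.
Qed.

End SignedExponent.

Theorem theorem3p2 (R : realType) (X : normedModType R)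
  (Y : completeNormedModType R) (l : int) (hl : l = 1 \/ l = -1)
  (f : X -> Y) (phi : X -> X -> R)
  (phi_ge0 : forall x y, 0 <= phi x y)
  (f_odd : forall x, f (- x) = - f x)
  (hD : forall x y, `|Dmap f x y| <= phi x y)
  (hsum : forall x, cvgn (fun n : nat =>
     \sum_(1 <= i < n) (8 : R) ^ (i%:Z * l)
        * phi ((2 ^ (i%:Z * l))^-1 *: x) ((2 ^ (i%:Z * l))^-1 *: x)))
  (hlim : forall x y, (fun n : nat =>
     (8 : R) ^ (l * n%:Z) * phi ((2 ^ (l * n%:Z))^-1 *: x) ((2 ^ (l * n%:Z))^-1 *: y))
     @ \oo --> 0) :
  exists C : X -> Y,
    [/\ forall x, (fun n : nat =>
           (8 : R) ^ (l * n%:Z) *: (f ((2 ^ (l * (n%:Z - l)))^-1 *: x)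
                                    - 2 *: f ((2 ^ (l * n%:Z))^-1 *: x))) @ \oo --> C x,
        cubic C,
        (forall x y, 3 *: C (x + 3 *: y) - C (3 *: x + y)
            = 12 *: (C (x + y) + C (x - y)) - 16 *: (C x + C y)
              + 12 *: C (2 *: y) - 4 *: C (2 *: x)),
        (forall x, `|f (2 *: x) - 2 *: f x - C x|
            <= 2^-1 * limn (fun n : nat =>
                 \sum_((absz (l - 1)%R)./2 <= i < n) (8 : R) ^ (i%:Z * l)
                   * phi ((2 ^ (l * (i%:Z + l)))^-1 *: x) ((2 ^ (l * (i%:Z + l)))^-1 *: x)))
      & forall C' : X -> Y, cubic C' ->
          (forall x y, 3 *: C' (x + 3 *: y) - C' (3 *: x + y)
            = 12 *: (C' (x + y) + C' (x - y)) - 16 *: (C' x + C' y)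
              + 12 *: C' (2 *: y) - 4 *: C' (2 *: x)) ->
          (forall x, `|f (2 *: x) - 2 *: f x - C' x|
            <= 2^-1 * limn (fun n : nat =>
                 \sum_((absz (l - 1)%R)./2 <= i < n) (8 : R) ^ (i%:Z * l)
                   * phi ((2 ^ (l * (i%:Z + l)))^-1 *: x) ((2 ^ (l * (i%:Z + l)))^-1 *: x))) ->
          C' = C].
Proof.
pose eps x := 2^-1 * diag_term phi (8 ^ l) (2 ^ l)^-1 (2^-1 *: x) (absz (l - 1))./2.
have c_ge0 : 0 <= (8 : R) ^ l by rewrite exprz_ge0.
have eps_ge0 x : 0 <= eps x by rewrite mulr_ge0 // mulr_ge0 ?exprn_ge0 ?exprz_ge0.
have step := sign_dilation_step_le hl (doubling_defect_diag_le f_odd hD).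
have summable x := sign_eps_summable (sign_diag_summable (hsum (2^-1 *: x))).
have majorantE x := sign_majorantE hl (sign_diag_summable (hsum (2^-1 *: x))).
have C_cvg := dilation_limit_cvg c_ge0 eps_ge0 step summable.
have C_inv := dilation_limit_invariant c_ge0 eps_ge0 step summable.
have phi_lim x y :
    (fun n => (8 ^ l) ^+ n * phi ((2 ^ l)^-1 ^+ n *: x) ((2 ^ l)^-1 ^+ n *: y)) @ \oo --> 0.
  by rewrite -(eq_cvg _ _ (sign_weightE phi x y)).
have DC0 := Dmap_limit_eq0 hD c_ge0 phi_lim C_cvg.
exists (dilation_limit (doubling_defect f) (8 ^ l) (2 ^ l)^-1); split.
- by move=> x; rewrite (eq_cvg _ _ (sign_iterateE hl f x)).
- apply: cubic_of_Dmap_eq0 DC0.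
    exact: dilation_limitN c_ge0 eps_ge0 step summable (doubling_defect_odd f f_odd).
  by apply/(sign_invariantP hl).
- by move=> x y; exact: Dmap_eq0_balanced.
- move=> x; rewrite majorantE.
  exact: (dilation_limit_dist c_ge0 eps_ge0 step summable).
- move=> C' C'_cubic _ C'_le.
  apply: (dilation_limit_unique c_ge0 eps_ge0 step summable).
    by apply/(sign_invariantP hl); exact: cubic_hom.
  by move=> x; rewrite -majorantE; exact: C'_le.
Qed.
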